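(* Let $(X,d)$ be a compact metric space and $f:X\to X$ continuous. Then for every entropy pair $(x,y)\in E(X,f)$ we have $(x,y)\in CR(f)^2$ and $x\sim y$.
   Context: A pair $(x,y)\in X^2$ with $x\ne y$ is an entropy pair if for all closed neighborhoods $A$ of $x$ and $B$ of $y$ with $A\cap B=\emptyset$, $h(f,\{X\setminus A,X\setminus B\})>0$, where $h(f,\mathcal U)$ is the entropy of $f$ relative to the open cover $\mathcal U$; $E(X,f)$ is the set of entropy pairs. A $\delta$-chain of $f$ is a finite sequence $(x_i)_{i=0}^k$, $k\ge1$, with $d(f(x_i),x_{i+1})\le\delta$; a $\delta$-cycle is a $\delta$-chain with $x_0=x_k$. $CR(f)$ is the set of points $x$ such that for every $\delta>0$ there is a $\delta$-cycle starting and ending at $x$. For $x,y\in CR(f)$, $x\sim y$ iff for every $\delta>0$ there are integers $m>0$, $N>0$ such that for every $n\ge N$ there are $\delta$-chains $(x_i)_{i=0}^{mn},(y_i)_{i=0}^{mn}$ in $CR(f)$ with $x_0=y_{mn}=x$, $x_{mn}=y_0=y$. *)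

From Stdlib Require Import Reals List.
Open Scope R_scope.
Set Implicit Arguments.

Section Dyn.
Variables (X : Type) (d : X -> X -> R).

Definition is_metric : Prop :=
  (forall x y, 0 <= d x y) /\
  (forall x y, d x y = 0 <-> x = y) /\
  (forall x y, d x y = d y x) /\
  (forall x y z, d x z <= d x y + d y z).

(** compactness (sequential; equivalent for metric spaces) *)
Definition seq_conv (u : nat -> X) (l : X) : Prop :=
  forall eps, 0 < eps -> exists N, forall n, (N <= n)%nat -> d (u n) l < eps.

Definition compact_space : Prop :=
  forall u : nat -> X, exists (phi : nat -> nat) (l : X),
    (forall n, (phi n < phi (S n))%nat) /\ seq_conv (fun n => u (phi n)) l.

Definition continuous_map (f : X -> X) : Prop :=
  forall x eps, 0 < eps -> exists del, 0 < del /\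
    forall y, d x y < del -> d (f x) (f y) < eps.

Definition closed_set (A : X -> Prop) : Prop :=
  forall y, (forall eps, 0 < eps -> exists z, A z /\ d y z < eps) -> A y.

Definition closed_nbhd (x : X) (A : X -> Prop) : Prop :=
  closed_set A /\ exists r, 0 < r /\ forall z, d x z < r -> A z.

(** Entropy of f relative to an open cover U indexed by I.
    The n-th join U v f^-1 U v ... v f^-(n-1) U has members
    indexed by words w (only w 0 .. w (n-1) matter). *)
Definition join_member (f : X -> X) (I : Type) (U : I -> X -> Prop)
  (n : nat) (w : nat -> I) (x : X) : Prop :=
  forall i, (i < n)%nat -> U (w i) (Nat.iter i f x).

Definition join_subcover (f : X -> X) (I : Type) (U : I -> X -> Prop)
  (n : nat) (ws : list (nat -> I)) : Prop :=
  forall x, exists w, In w ws /\ join_member f U n w x.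

Definition min_subcover_card (f : X -> X) (I : Type) (U : I -> X -> Prop)
  (n k : nat) : Prop :=
  (exists ws, length ws = k /\ join_subcover f U n ws) /\
  (forall ws, join_subcover f U n ws -> (k <= length ws)%nat).

Definition cover_entropy (f : X -> X) (I : Type) (U : I -> X -> Prop)
  (h : R) : Prop :=
  exists N : nat -> nat,
    (forall n, min_subcover_card f U (S n) (N n)) /\
    Un_cv (fun n => ln (INR (N n)) / INR (S n)) h.

Definition entropy_pair (f : X -> X) (x y : X) : Prop :=
  x <> y /\
  forall A B : X -> Prop, closed_nbhd x A -> closed_nbhd y B ->
    (forall z, ~ (A z /\ B z)) ->
    exists h, cover_entropy f
                (fun b : bool => fun z => if b then ~ A z else ~ B z) h
              /\ 0 < h.

Definition delta_chain (f : X -> X) (del : R) (k : nat) (c : nat -> X) : Prop :=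
  (1 <= k)%nat /\ forall i, (i < k)%nat -> d (f (c i)) (c (S i)) <= del.

Definition CR (f : X -> X) (x : X) : Prop :=
  forall del, 0 < del -> exists k c, delta_chain f del k c /\ c O = x /\ c k = x.

Definition cr_rel (f : X -> X) (x y : X) : Prop :=
  CR f x /\ CR f y /\
  forall del, 0 < del -> exists m N, (0 < m)%nat /\ (0 < N)%nat /\
    forall n, (N <= n)%nat -> exists cx cy : nat -> X,
      delta_chain f del (m * n) cx /\ delta_chain f del (m * n) cy /\
      (forall i, (i <= m * n)%nat -> CR f (cx i) /\ CR f (cy i)) /\
      cx O = x /\ cy (m * n)%nat = x /\ cx (m * n)%nat = y /\ cy O = y.

End Dyn.

From Stdlib Require Import Reals List Lia Lra Arith Classical ClassicalEpsilon.
Open Scope R_scope.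

(* Fix an entropy pair (x, y) and del > 0, and a scale eta at which sequences
   eta-shadowing orbit segments are del-chains.  Everything rests on a
   zero-entropy criterion (zero_entropy_criterion): if orbits leave a set V
   containing two disjoint balls A, B at most M times, and on each stretch
   spent in V one parameter s <= n separates the visits to A from those to B,
   then the n-th join of the cover {X \ A, X \ B} is covered by (n+1)^(2M+1)
   members, so its entropy is zero.
   - If x (or y) carried no del-cycle, orbits would visit a small ball around
     it at most once (V = X, M = 0); hence x, y lie in CR(f).
   - By compactness, orbits leave the eta-neighbourhood of CR(f) boundedly
     often (near_CR_exit_times), and stretches inside it are traced by
     del-chains through CR(f).  Without a CR-chain y -> x, or without chains
     x -> y whose lengths are loop lengths at x, first visits to the balls
     would separate them; so such chains exist (commensurable_chains).
   Pumping loops at x then yields chains x -> y and y -> x of the common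
   length m n for every n, that is x ~ y. *)

Lemma least_witness (Q : nat -> Prop) :
  (exists n, Q n) -> exists n, Q n /\ forall m, Q m -> (n <= m)%nat.
Proof.
  intro Hex.
  destruct (dec_inh_nat_subset_has_unique_least_element Q (fun n => classic (Q n)) Hex)
    as [n [Hn _]].
  now exists n.
Qed.

Lemma first_visit (I C : nat -> Prop) (n : nat) : (forall i, I i -> (i < n)%nat) ->
  exists s, (s <= n)%nat /\ (forall i, I i -> C i -> (s <= i)%nat) /\
            (s = n \/ (I s /\ C s)).
Proof.
  intro HI. destruct (classic (exists i, I i /\ C i)) as [Hex|Hnone].
  - destruct (least_witness _ Hex) as [s [[Hs HCs] Hmin]].
    exists s. specialize (HI s Hs). repeat split; [lia| |tauto].
    intros i Hi HC. exact (Hmin i (conj Hi HC)).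
  - exists n. repeat split; [lia| |tauto].
    intros i Hi HC. exfalso. eauto.
Qed.

(* count_below p M i = #{k < M | p k < i}: how many of the marked times
   p 0, ..., p (M-1) precede i.  Times with the same count lie between the
   same two consecutive marks. *)
Fixpoint count_below (p : nat -> nat) (M i : nat) : nat :=
  match M with
  | O => O
  | S M' => (count_below p M' i + (if Nat.ltb (p M') i then 1 else 0))%nat
  end.

Lemma count_below_le p M i : (count_below p M i <= M)%nat.
Proof. induction M; simpl; [lia|]. destruct (Nat.ltb (p M) i); lia. Qed.

Lemma count_below_ext p q M i :
  (forall k, (k < M)%nat -> p k = q k) -> count_below p M i = count_below q M i.
Proof.
  induction M; intro H; simpl; auto.
  rewrite IHM by (intros; apply H; lia). rewrite H by lia. reflexivity.
Qed.

Lemma count_below_mono p M i j : (i <= j)%nat -> (count_below p M i <= count_below p M j)%nat.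
Proof.
  intro Hij. induction M; simpl; [lia|].
  destruct (Nat.ltb_spec (p M) i); destruct (Nat.ltb_spec (p M) j); lia.
Qed.

Lemma count_below_strict p M i j k : (k < M)%nat -> (i <= p k)%nat -> (p k < j)%nat ->
  (count_below p M i < count_below p M j)%nat.
Proof.
  intros Hk H1 H2. induction M; [lia|]. simpl.
  pose proof (count_below_mono p M i j ltac:(lia)).
  destruct (Nat.eq_dec k M) as [->|Hne]; [|specialize (IHM ltac:(lia))];
  destruct (Nat.ltb_spec (p M) i); destruct (Nat.ltb_spec (p M) j); lia.
Qed.

(* codes B J lists (representatives of) all maps [0, J) -> [0, B]. *)
Fixpoint codes (B J : nat) : list (nat -> nat) :=
  match J with
  | O => (fun _ => O) :: nil
  | S J' => flat_map (fun e => map (fun v k => if Nat.eqb k J' then v else e k)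
                                   (seq 0 (S B)))
                     (codes B J')
  end.

Lemma codes_length B J : length (codes B J) = Nat.pow (S B) J.
Proof.
  assert (Hfm : forall (l : list (nat -> nat)) (g : (nat -> nat) -> list (nat -> nat)),
            (forall e, length (g e) = S B) -> length (flat_map g l) = (S B * length l)%nat).
  { intros l g Hg. induction l; simpl; [lia|]. rewrite length_app, IHl, Hg. lia. }
  induction J; [reflexivity|]. cbn [codes].
  rewrite Hfm, IHJ, Nat.pow_succ_r'; [reflexivity|].
  intro e. now rewrite length_map, length_seq.
Qed.

Lemma codes_complete B J q : (forall k, (k < J)%nat -> (q k <= B)%nat) ->
  exists e, In e (codes B J) /\ forall k, (k < J)%nat -> e k = q k.
Proof.
  revert q. induction J; intros q Hq.
  - exists (fun _ => O). split; [now left|]. intros; lia.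
  - destruct (IHJ q) as [e [He Heq]]; [intros; apply Hq; lia|].
    exists (fun k => if Nat.eqb k J then q J else e k). split.
    + assert (Hin : In (q J) (seq 0 (S B))) by (apply in_seq; specialize (Hq J (le_n _)); lia).
      apply in_flat_map. exists e. split; [exact He|].
      exact (in_map (fun v k => if Nat.eqb k J then v else e k) _ _ Hin).
    + intros k Hk. destruct (Nat.eqb_spec k J) as [->|]; auto. apply Heq. lia.
Qed.

(* The binary word decoded from a code e: the first M entries of e are marks,
   and on the stretch of times with count c the letter at time i is
   "P (e (M + c)) i is false". *)
Definition decode (P : nat -> nat -> Prop) (M : nat) (e : nat -> nat) (i : nat) : bool :=
  if excluded_middle_informative (P (e (M + count_below e M i)%nat) i) then false else true.

Lemma decode_ext P M e q : (forall k, (k < 2 * M + 1)%nat -> e k = q k) ->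
  forall i, decode P M e i = decode P M q i.
Proof.
  intros H i. unfold decode.
  rewrite (count_below_ext e q M i) by (intros; apply H; lia).
  rewrite (H (M + count_below q M i)%nat) by (pose proof (count_below_le q M i); lia).
  reflexivity.
Qed.
Lemma inv_succ_small (r : R) : 0 < r -> exists N : nat, forall n, (N <= n)%nat -> / INR (S n) < r.
Proof.
  intro Hr. destruct (INR_unbounded (/ r)) as [N HN].
  exists N. intros n Hn.
  assert (HS : INR N <= INR (S n)) by (apply le_INR; lia).
  assert (Hp : 0 < / r) by (apply Rinv_0_lt_compat; lra).
  rewrite <- (Rinv_inv r).
  apply Rinv_lt_contravar; [apply Rmult_lt_0_compat; lra | lra].
Qed.

(* ln (k^2) <= 2 (k - 1), from ln t <= t - 1 applied to t = k. *)
Lemma ln_sq_le (k : R) : 1 <= k -> ln (k * k) <= 2 * (k - 1).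
Proof.
  intro Hk. rewrite ln_mult by lra.
  pose proof (exp_ineq1_le (ln k)) as H. rewrite exp_ln in H by lra. lra.
Qed.

(* Covers whose minimal sizes grow at most polynomially have entropy zero:
   along n + 2 = K^2 the rate ln N(n) / (n + 1) is at most 2 J / (K + 1). *)
Lemma polynomial_growth_entropy (N : nat -> nat) (J : nat) (h : R) :
  (forall n, (1 <= N n)%nat /\ (N n <= Nat.pow (S (S n)) J)%nat) ->
  Un_cv (fun n => ln (INR (N n)) / INR (S n)) h -> h <= 0.
Proof.
  intros HN Hcv. apply Rnot_lt_le. intro Hh.
  destruct (Hcv (h / 2)) as [N0 HN0]; [lra|].
  destruct (INR_unbounded (4 * INR J / h)) as [K1 HK1].
  set (K := (K1 + N0 + 2)%nat). set (n := (K * K - 2)%nat).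
  assert (HSn : (S (S n) = K * K)%nat) by (unfold n, K; nia).
  specialize (HN0 n ltac:(unfold n, K; nia)). unfold R_dist in HN0.
  set (k := INR K). set (j := INR J).
  assert (Hk : 2 <= k) by (unfold k, K; rewrite plus_INR, plus_INR; simpl; pose proof (pos_INR K1);
                           pose proof (pos_INR N0); lra).
  assert (Hhk : 4 * j < h * k).
  { assert (INR K1 <= k) by (unfold k, K; apply le_INR; lia).
    apply (Rmult_lt_compat_r h) in HK1; [|lra].
    unfold Rdiv in HK1. rewrite Rmult_assoc, Rinv_l in HK1 by lra. fold j in HK1. nra. }
  assert (HS : INR (S n) = k * k - 1).
  { assert (INR (S (S n)) = k * k) by (rewrite HSn, mult_INR; reflexivity).
    rewrite S_INR in H. lra. }
  destruct (HN n) as [H1 H2].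
  assert (HNpos : 0 < INR (N n)) by (apply lt_0_INR; lia).
  assert (HL : ln (INR (N n)) <= 2 * j * (k - 1)).
  { apply le_INR in H2. rewrite pow_INR, HSn, mult_INR in H2. fold k in H2.
    apply Rle_trans with (ln ((k * k) ^ J)).
    - destruct (Rle_lt_or_eq_dec _ _ H2) as [Hlt|Heq]; [left; apply ln_increasing; lra|rewrite Heq; lra].
    - rewrite ln_pow by nra. fold j. pose proof (ln_sq_le k ltac:(lra)).
      assert (0 <= j) by apply pos_INR. nra. }
  rewrite HS in HN0. apply Rabs_def2 in HN0.
  assert (Hpos : 0 < k * k - 1) by nra.
  assert (Hrate : h / 2 * (k * k - 1) < ln (INR (N n))).
  { replace (ln (INR (N n))) with (ln (INR (N n)) / (k * k - 1) * (k * k - 1)) by (field; lra).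
    apply Rmult_lt_compat_r; lra. }
  nra.
Qed.

Section CompactMetric.
Variables (X : Type) (d : X -> X -> R).
Hypothesis hd : is_metric d.
Hypothesis hc : compact_space d.

Lemma d_nonneg a b : 0 <= d a b. Proof. apply hd. Qed.
Lemma d_refl a : d a a = 0. Proof. now apply hd. Qed.
Lemma d_sym a b : d a b = d b a. Proof. apply hd. Qed.
Lemma d_tri a b c : d a c <= d a b + d b c. Proof. apply hd. Qed.

Lemma d_pos_neq a b : a <> b -> 0 < d a b.
Proof.
  intro H. destruct (d_nonneg a b) as [H1|H1]; auto.
  exfalso. apply H. now apply hd.
Qed.

Definition ball (r : R) (a : X) : X -> Prop := fun z => d a z <= r.

Lemma ball_closed_nbhd r a : 0 < r -> closed_nbhd d a (ball r a).
Proof.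
  intro Hr. split.
  - intros w Hw. unfold ball. apply Rnot_lt_le. intro Hlt.
    destruct (Hw (d a w - r)) as [z [Hz Hwz]]; [lra|]. unfold ball in Hz.
    pose proof (d_tri a z w). rewrite (d_sym z w) in H. lra.
  - exists r. split; auto. intros z Hz. unfold ball. lra.
Qed.

Lemma ball_disjoint r a b : 2 * r < d a b -> forall z, ~ (ball r a z /\ ball r b z).
Proof.
  intros H z [H1 H2]. unfold ball in *.
  pose proof (d_tri a z b). rewrite (d_sym z b) in H0. lra.
Qed.

Lemma cluster_point (u : nat -> X) :
  exists l, forall eta, 0 < eta -> forall N, exists n, (N <= n)%nat /\ d l (u n) < eta.
Proof.
  destruct (hc u) as [phi [l [Hphi Hconv]]]. exists l. intros eta Heta N.
  assert (Hge : forall n, (n <= phi n)%nat) by (induction n; [lia|]; specialize (Hphi n); lia).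
  destruct (Hconv eta Heta) as [N1 HN1].
  exists (phi (Nat.max N N1)). split; [pose proof (Hge (Nat.max N N1)); lia|].
  rewrite d_sym. apply HN1. lia.
Qed.

(* Total boundedness: finitely many r-balls cover X.  Otherwise a greedy
   sequence of r-separated points would have no cluster point. *)
Lemma totally_bounded (x0 : X) (r : R) : 0 < r ->
  exists (M : nat) (centre : nat -> X), forall w, exists k, (k < M)%nat /\ d w (centre k) < r.
Proof.
  intro Hr. apply NNPP. intro Hno.
  assert (Hfar : forall l : list X, exists w,
             forall k, (k < length l)%nat -> r <= d w (nth k l x0)).
  { intro l. apply NNPP. intro Hl. apply Hno. exists (length l), (fun k => nth k l x0).
    intro w. apply NNPP. intro Hw. apply Hl. exists w. intros k Hk.
    apply Rnot_lt_le. intro Hlt. apply Hw. eauto. }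
  destruct (choice _ Hfar) as [F HF].
  set (L := fix L (n : nat) : list X := match n with O => nil | S n' => L n' ++ F (L n') :: nil end).
  assert (Hlen : forall n, length (L n) = n).
  { induction n; simpl; auto. rewrite length_app, IHn. simpl. lia. }
  assert (Hnth : forall n k, (k < n)%nat -> nth k (L n) x0 = F (L k)).
  { induction n; intros k Hk; [lia|]. simpl. destruct (Nat.eq_dec k n) as [->|Hne].
    - rewrite app_nth2; rewrite Hlen; [|lia]. now rewrite Nat.sub_diag.
    - rewrite app_nth1 by (rewrite Hlen; lia). apply IHn. lia. }
  destruct (cluster_point (fun n => F (L n))) as [l Hl].
  destruct (Hl (r / 2) ltac:(lra) 0%nat) as [i [_ Hi]].
  destruct (Hl (r / 2) ltac:(lra) (S i)) as [j [Hij Hj]].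
  pose proof (HF (L j) i) as Hsep. rewrite Hlen, Hnth in Hsep by lia.
  specialize (Hsep ltac:(lia)).
  pose proof (d_tri (F (L j)) l (F (L i))) as T. rewrite (d_sym (F (L j)) l) in T. lra.
Qed.

Section Dynamics.
Variable f : X -> X.
Hypothesis hf : continuous_map d f.

Lemma uniform_continuity (eps : R) : 0 < eps ->
  exists eta, 0 < eta /\ forall a b, d a b < eta -> d (f a) (f b) < eps.
Proof.
  intro He. apply NNPP. intro Hno.
  assert (Hbad : forall n : nat, exists ab : X * X,
             d (fst ab) (snd ab) < / INR (S n) /\ eps <= d (f (fst ab)) (f (snd ab))).
  { intro n. apply NNPP. intro Hn. apply Hno. exists (/ INR (S n)). split.
    - apply Rinv_0_lt_compat, lt_0_INR. lia.
    - intros a b Hab. apply Rnot_le_lt. intro Hle. apply Hn. exists (a, b). auto. }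
  destruct (choice _ Hbad) as [g Hg].
  destruct (cluster_point (fun n => fst (g n))) as [l Hl].
  destruct (hf l (eps / 2)) as [del [Hdel Hcont]]; [lra|].
  destruct (inv_succ_small (del / 2)) as [N HN]; [lra|].
  destruct (Hl (del / 2) ltac:(lra) N) as [n [Hn Hln]].
  destruct (Hg n) as [Hclose Hfar]. specialize (HN n Hn).
  set (a := fst (g n)) in *. set (b := snd (g n)) in *.
  assert (Hlb : d l b < del) by (pose proof (d_tri l a b); lra).
  pose proof (Hcont a ltac:(lra)) as Ea. pose proof (Hcont b Hlb) as Eb.
  pose proof (d_tri (f a) (f l) (f b)) as T. rewrite (d_sym (f a) (f l)) in T. lra.
Qed.

Definition orbit (z : X) (k : nat) : X := Nat.iter k f z.

Lemma orbit_S z k : orbit z (S k) = f (orbit z k).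
Proof. reflexivity. Qed.

Definition has_cycle (del : R) (w : X) : Prop :=
  exists k c, delta_chain d f del k c /\ c O = w /\ c k = w.

Lemma has_cycle_mono del del' w : del <= del' -> has_cycle del w -> has_cycle del' w.
Proof.
  intros Hle [k [c [[Hk Hc] Hends]]]. exists k, c. split; [split|]; auto.
  intros i Hi. specialize (Hc i Hi). lra.
Qed.

Lemma chain_perturb (eps1 eta1 del1 beta : R)
  (huc : forall a b, d a b < eta1 -> d (f a) (f b) < eps1) (K : nat) (c c' : nat -> X) :
  (forall k, (k < K)%nat -> d (f (c k)) (c (S k)) <= del1) ->
  (forall k, (k <= K)%nat -> d (c' k) (c k) < eta1 /\ d (c' k) (c k) <= beta) ->
  forall k, (k < K)%nat -> d (f (c' k)) (c' (S k)) <= eps1 + del1 + beta.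
Proof.
  intros Hc Hc' k Hk.
  destruct (Hc' k ltac:(lia)) as [H1 _]. destruct (Hc' (S k) ltac:(lia)) as [_ H2].
  pose proof (huc _ _ H1) as H3. pose proof (Hc k Hk) as H4.
  pose proof (d_tri (f (c' k)) (f (c k)) (c' (S k))) as T1.
  pose proof (d_tri (f (c k)) (c (S k)) (c' (S k))) as T2.
  rewrite (d_sym (c (S k)) (c' (S k))) in T2. lra.
Qed.

(* A point approached by points carrying arbitrarily fine cycles is chain
   recurrent: move both ends of such a cycle onto the point. *)
Lemma cycle_limit_recurrent (l : X) :
  (forall del eta, 0 < del -> 0 < eta -> exists w, d l w < eta /\ has_cycle del w) ->
  CR d f l.
Proof.
  intros Happ del Hdel.
  destruct (uniform_continuity (del / 3)) as [eta1 [Heta1 Huc]]; [lra|].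
  destruct (Happ (del / 3) (Rmin eta1 (del / 3))) as [w [Hlw [K [c [[HK Hc] [H0 HKe]]]]]];
    [lra|apply Rmin_pos; lra|].
  pose proof (Rmin_l eta1 (del / 3)). pose proof (Rmin_r eta1 (del / 3)).
  set (c' := fun k => if orb (Nat.eqb k 0) (Nat.eqb k K) then l else c k).
  assert (Hclose : forall k, (k <= K)%nat -> d (c' k) (c k) < eta1 /\ d (c' k) (c k) <= del / 3).
  { intros k Hk. unfold c'.
    destruct (Nat.eqb_spec k 0) as [->|]; [simpl; rewrite H0; split; lra|].
    destruct (Nat.eqb_spec k K) as [->|]; [simpl; rewrite HKe; split; lra|].
    simpl. rewrite d_refl. split; lra. }
  exists K, c'. split; [split|split].
  - exact HK.
  - intros i Hi. pose proof (chain_perturb _ _ _ _ Huc K c c' Hc Hclose i Hi). lra.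
  - reflexivity.
  - unfold c'. now rewrite Nat.eqb_refl, Bool.orb_true_r.
Qed.

Definition near_CR (eta : R) (w : X) : Prop := exists p, CR d f p /\ d p w < eta.

Lemma cycles_near_CR (eta : R) : 0 < eta ->
  exists del, 0 < del /\ forall w, has_cycle del w -> near_CR eta w.
Proof.
  intro Heta. apply NNPP. intro Hno.
  assert (Hbad : forall n : nat, exists w, has_cycle (/ INR (S n)) w /\ ~ near_CR eta w).
  { intro n. apply NNPP. intro Hn. apply Hno. exists (/ INR (S n)). split.
    - apply Rinv_0_lt_compat, lt_0_INR. lia.
    - intros w Hw. apply NNPP. intro Hw'. apply Hn. eauto. }
  destruct (choice _ Hbad) as [g Hg].
  destruct (cluster_point g) as [l Hl].
  assert (HCR : CR d f l).
  { apply cycle_limit_recurrent. intros del eta' Hdel Heta'.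
    destruct (inv_succ_small del Hdel) as [N HN].
    destruct (Hl eta' Heta' N) as [n [Hn Hln]].
    exists (g n). split; [exact Hln|].
    apply (has_cycle_mono (/ INR (S n))); [left; auto|apply Hg]. }
  destruct (Hl eta Heta 0%nat) as [n [_ Hln]].
  apply (proj2 (Hg n)). exists l. auto.
Qed.

Lemma orbit_return_cycle (del : R) z a b : 0 <= del -> (a < b)%nat ->
  d (orbit z b) (orbit z a) <= del -> has_cycle del (orbit z a).
Proof.
  intros Hdel Hab Hret. set (g := (b - a)%nat).
  exists g, (fun k => if Nat.eqb k g then orbit z a else orbit z (a + k)).
  split; [split|split].
  - unfold g. lia.
  - intros i Hi. destruct (Nat.eqb_spec i g); [lia|]. rewrite <- orbit_S.
    destruct (Nat.eqb_spec (S i) g) as [Hg|Hg].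
    + replace (S (a + i)) with b by (unfold g in *; lia). exact Hret.
    + rewrite Nat.add_succ_r, d_refl. lra.
  - destruct (Nat.eqb_spec 0 g); [unfold g in *; lia|]. now rewrite Nat.add_0_r.
  - now rewrite Nat.eqb_refl.
Qed.

Definition exit_times (V : X -> Prop) (M : nat) : Prop :=
  forall z n, exists p : nat -> nat, (forall k, (k < M)%nat -> (p k <= n)%nat) /\
    (forall t, (t < n)%nat -> ~ V (orbit z t) -> exists k, (k < M)%nat /\ p k = t).

(* Orbits leave the eta-neighbourhood of CR(f) a bounded number of times: two
   exits in the same cell of a fine finite cover would close a fine cycle at a
   point far from CR(f). *)
Lemma near_CR_exit_times (x0 : X) (eta : R) : 0 < eta ->
  exists M, exit_times (near_CR eta) M.
Proof.
  intro Heta. destruct (cycles_near_CR eta Heta) as [del [Hdel Hcyc]].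
  destruct (totally_bounded x0 (del / 2)) as [M [centre Hcentre]]; [lra|].
  destruct (choice _ Hcentre) as [cell Hcell].
  exists M. intros z n.
  set (exits := filter (fun t => if excluded_middle_informative (near_CR eta (orbit z t))
                                 then false else true) (seq 0 n)).
  assert (Hexits : forall t, In t exits <-> (t < n)%nat /\ ~ near_CR eta (orbit z t)).
  { intro t. unfold exits. rewrite filter_In, in_seq.
    destruct (excluded_middle_informative (near_CR eta (orbit z t))); intuition (try lia; discriminate). }
  assert (Hcell_inj : forall a b, In a exits -> In b exits -> (a < b)%nat ->
                        cell (orbit z a) <> cell (orbit z b)).
  { intros a b Ha Hb Hab Heq. apply Hexits in Ha. apply (proj2 Ha), Hcyc.
    apply (orbit_return_cycle del z a b); [lra|exact Hab|].
    destruct (Hcell (orbit z a)) as [_ H1]. destruct (Hcell (orbit z b)) as [_ H2].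
    rewrite Heq in H1. pose proof (d_tri (orbit z b) (centre (cell (orbit z b))) (orbit z a)).
    rewrite (d_sym (centre _) (orbit z a)) in H. lra. }
  assert (Hlen : (length exits <= M)%nat).
  { assert (Hnodup : NoDup (map (fun t => cell (orbit z t)) exits)).
    { apply NoDup_map_NoDup_ForallPairs; [|apply NoDup_filter, seq_NoDup].
      intros a b Ha Hb Heq. destruct (Nat.lt_total a b) as [H|[H|H]]; auto; exfalso;
        [exact (Hcell_inj a b Ha Hb H Heq)|exact (Hcell_inj b a Hb Ha H (eq_sym Heq))]. }
    assert (Hincl : incl (map (fun t => cell (orbit z t)) exits) (seq 0 M)).
    { intros k Hk. apply in_map_iff in Hk. destruct Hk as [t [<- _]].
      apply in_seq. destruct (Hcell (orbit z t)). lia. }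
    pose proof (NoDup_incl_length Hnodup Hincl). now rewrite length_map, length_seq in H. }
  exists (fun k => nth k exits n). split.
  - intros k Hk. destruct (Compare_dec.lt_dec k (length exits)) as [Hl|Hl].
    + pose proof (proj1 (Hexits _) (nth_In exits n Hl)). lia.
    + rewrite nth_overflow; lia.
  - intros t Ht HV. destruct (In_nth exits t n (proj2 (Hexits t) (conj Ht HV))) as [k [Hk Hkt]].
    exists k. split; [lia|auto].
Qed.

Definition V_stretch (V : X -> Prop) (z : X) (I : nat -> Prop) : Prop :=
  forall i j t, I i -> I j -> (i <= t)%nat -> (t <= j)%nat -> V (orbit z t).

Definition separates (A B : X -> Prop) (P : nat -> nat -> Prop) (z : X)
  (I : nat -> Prop) (s : nat) : Prop :=
  forall i, I i -> (A (orbit z i) -> P s i) /\ (B (orbit z i) -> ~ P s i).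

Definition stretch_separable (V A B : X -> Prop) (P : nat -> nat -> Prop) : Prop :=
  forall z n (I : nat -> Prop), (forall i, I i -> (i < n)%nat) -> V_stretch V z I ->
    exists s, (s <= n)%nat /\ separates A B P z I s.

Lemma stretch_separable_swap V A B P :
  stretch_separable V B A P -> stretch_separable V A B (fun s i => ~ P s i).
Proof.
  intros Hsep z n I HI HV. destruct (Hsep z n I HI HV) as [s [Hs Hsp]].
  exists s. split; [exact Hs|]. intros i Hi. specialize (Hsp i Hi). tauto.
Qed.

Definition two_cover (A B : X -> Prop) : bool -> X -> Prop :=
  fun b w => if b then ~ A w else ~ B w.

Lemma exit_stretch (V : X -> Prop) (M : nat) z n (p : nat -> nat) c :
  (forall t, (t < n)%nat -> ~ V (orbit z t) -> exists k, (k < M)%nat /\ p k = t) ->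
  V_stretch V z (fun i => (i < n)%nat /\ count_below p M i = c /\ V (orbit z i)).
Proof.
  intros Hexit i j t [Hi [Hci HVi]] [Hj [Hcj HVj]] Hit Htj.
  apply NNPP. intro HVt.
  destruct (Hexit t ltac:(lia) HVt) as [k [Hk Hpk]].
  assert (t <> i) by (intros ->; contradiction).
  assert (t <> j) by (intros ->; contradiction).
  pose proof (count_below_strict p M i j k Hk ltac:(lia) ltac:(lia)). lia.
Qed.

Lemma decode_member (V A B : X -> Prop) (P : nat -> nat -> Prop) (M : nat) z n
  (p sf : nat -> nat) :
  (forall w, A w -> V w) -> (forall w, B w -> V w) ->
  (forall c, (c <= M)%nat ->
     separates A B P z (fun i => (i < n)%nat /\ count_below p M i = c /\ V (orbit z i)) (sf c)) ->
  join_member f (two_cover A B) n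
    (decode P M (fun k => if Nat.ltb k M then p k else sf (k - M)%nat)) z.
Proof.
  intros HAV HBV Hsf i Hi. set (q := fun k => if Nat.ltb k M then p k else sf (k - M)%nat).
  assert (Hcount : count_below q M i = count_below p M i).
  { apply count_below_ext. intros k Hk. unfold q. destruct (Nat.ltb_spec k M); [reflexivity|lia]. }
  set (c := count_below p M i) in Hcount.
  assert (Hqc : q (M + c)%nat = sf c).
  { unfold q. destruct (Nat.ltb_spec (M + c) M); [lia|]. f_equal. lia. }
  specialize (Hsf c (count_below_le p M i)).
  change (two_cover A B (decode P M q i) (orbit z i)).
  unfold decode, two_cover. rewrite Hcount, Hqc.
  destruct (excluded_middle_informative (P (sf c) i)) as [HP|HP].
  - intro HB. exact (proj2 (Hsf i (conj Hi (conj eq_refl (HBV _ HB)))) HB HP).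
  - intro HA. exact (HP (proj1 (Hsf i (conj Hi (conj eq_refl (HAV _ HA)))) HA)).
Qed.

(* Bounded exits from V and separable V-stretches make the joins of
   {X \ A, X \ B} coverable by polynomially many members: a member is
   determined by M exit times and M + 1 parameters, all at most n. *)
Lemma join_cover_polynomial (V A B : X -> Prop) (P : nat -> nat -> Prop) (M : nat) :
  (forall w, A w -> V w) -> (forall w, B w -> V w) ->
  exit_times V M -> stretch_separable V A B P ->
  forall n, exists ws, (length ws <= Nat.pow (S n) (2 * M + 1))%nat /\
                       join_subcover f (two_cover A B) n ws.
Proof.
  intros HAV HBV Hexit Hsep n.
  exists (map (decode P M) (codes n (2 * M + 1))). split.
  { rewrite length_map, codes_length. lia. }
  intro z. destruct (Hexit z n) as [p [Hpb Hps]].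
  set (I := fun c i => (i < n)%nat /\ count_below p M i = c /\ V (orbit z i)).
  assert (Hpar : forall c, exists s, (c <= M)%nat -> (s <= n)%nat /\ separates A B P z (I c) s).
  { intro c. destruct (Compare_dec.le_lt_dec c M) as [Hc|Hc]; [|exists 0%nat; lia].
    destruct (Hsep z n (I c)) as [s Hs]; [now intros i [Hi _]|apply exit_stretch, Hps|].
    exists s. auto. }
  destruct (choice _ Hpar) as [sf Hsf].
  set (q := fun k => if Nat.ltb k M then p k else sf (k - M)%nat).
  destruct (codes_complete n (2 * M + 1) q) as [e [He Heq]].
  { intros k Hk. unfold q. destruct (Nat.ltb_spec k M); [apply Hpb; auto|apply Hsf; lia]. }
  exists (decode P M e). split; [now apply in_map|].
  intros i Hi. rewrite (decode_ext P M e q Heq i).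
  refine (decode_member V A B P M z n p sf HAV HBV _ i Hi). intros c Hc. apply Hsf, Hc.
Qed.

Lemma zero_entropy_criterion (x0 : X) (V A B : X -> Prop) (P : nat -> nat -> Prop) (M : nat) :
  (forall w, A w -> V w) -> (forall w, B w -> V w) ->
  exit_times V M -> stretch_separable V A B P ->
  forall h, cover_entropy f (two_cover A B) h -> h <= 0.
Proof.
  intros HAV HBV Hexit Hsep h [N [HN Hcv]].
  apply (polynomial_growth_entropy N (2 * M + 1) h); auto.
  intro n. destruct (HN n) as [[ws [Hl Hj]] Hmin]. split.
  - destruct (Hj x0) as [w [Hw _]]. destruct ws; [destruct Hw|]. simpl in Hl. lia.
  - destruct (join_cover_polynomial V A B P M HAV HBV Hexit Hsep (S n)) as [ws' [Hl' Hj']].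
    specialize (Hmin ws' Hj'). lia.
Qed.

Lemma chain_modulus (del : R) : 0 < del -> exists eta, 0 < eta /\ eta <= del / 2 /\
  forall a b, d a b < eta -> d (f a) (f b) < del / 2.
Proof.
  intro Hdel. destruct (uniform_continuity (del / 2)) as [eta0 [Heta0 Huc]]; [lra|].
  exists (Rmin eta0 (del / 2)). split; [apply Rmin_pos; lra|]. split; [apply Rmin_r|].
  intros a b Hab. apply Huc. pose proof (Rmin_l eta0 (del / 2)). lra.
Qed.

Lemma separating_radius (x y : X) (eta : R) : x <> y -> 0 < eta ->
  exists r, 0 < r /\ r < eta /\ 2 * r < d x y.
Proof.
  intros Hxy Heta. pose proof (d_pos_neq x y Hxy).
  exists (Rmin (eta / 2) (d x y / 3)).
  pose proof (Rmin_l (eta / 2) (d x y / 3)). pose proof (Rmin_r (eta / 2) (d x y / 3)).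
  repeat split; [apply Rmin_pos|..]; lra.
Qed.

Lemma entropy_pair_balls x y r : entropy_pair d f x y -> 0 < r -> 2 * r < d x y ->
  exists h, cover_entropy f (two_cover (ball r x) (ball r y)) h /\ 0 < h.
Proof.
  intros [_ HE] Hr Hrxy.
  exact (HE _ _ (ball_closed_nbhd r x Hr) (ball_closed_nbhd r y Hr) (ball_disjoint r x y Hrxy)).
Qed.

Lemma exit_times_trivial : exit_times (fun _ => True) 0.
Proof. intros z n. exists (fun _ => 0%nat). split; intros; [lia|contradiction]. Qed.

Lemma single_visit_separable (A B : X -> Prop) :
  (forall z i j, (i < j)%nat -> A (orbit z i) -> A (orbit z j) -> False) ->
  (forall w, ~ (A w /\ B w)) ->
  stretch_separable (fun _ => True) A B (fun s i => i = s).
Proof.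
  intros Honce Hdisj z n I HI _.
  destruct (first_visit I (fun i => A (orbit z i)) n HI) as [s [Hs [Hmin Hvis]]].
  exists s. split; [exact Hs|]. intros i Hi. specialize (HI i Hi). split.
  - intro HA. specialize (Hmin i Hi HA).
    destruct Hvis as [->|[_ HAs]]; [lia|].
    destruct (Nat.eq_dec i s) as [|Hne]; [assumption|].
    exfalso. apply (Honce z s i); [lia|assumption|assumption].
  - intros HB ->. destruct Hvis as [->|[_ HAs]]; [lia|]. exact (Hdisj _ (conj HAs HB)).
Qed.

Section FineChains.
Variables (del eta : R).
Hypothesis Heta_pos : 0 < eta.
Hypothesis Heta_small : eta <= del / 2.
Hypothesis Heta_mod : forall a b, d a b < eta -> d (f a) (f b) < del / 2.

Lemma shadow_chain z i g (c : nat -> X) : (1 <= g)%nat ->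
  (forall k, (k <= g)%nat -> d (c k) (orbit z (i + k)) < eta) -> delta_chain d f del g c.
Proof.
  intros Hg Hc. split; [exact Hg|]. intros k Hk.
  assert (Horbit : forall k, (k < g)%nat -> d (f (orbit z (i + k))) (orbit z (i + S k)) <= 0).
  { intros k' _. rewrite Nat.add_succ_r, <- orbit_S, d_refl. lra. }
  assert (Hclose : forall k, (k <= g)%nat ->
            d (c k) (orbit z (i + k)) < eta /\ d (c k) (orbit z (i + k)) <= eta).
  { intros k' Hk'. specialize (Hc k' Hk'). split; lra. }
  pose proof (chain_perturb (del / 2) eta 0 eta Heta_mod g _ c Horbit Hclose k Hk). lra.
Qed.

Lemma return_cycle a z i j : (i < j)%nat ->
  d a (orbit z i) < eta -> d a (orbit z j) < eta -> has_cycle del a.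
Proof.
  intros Hij Hi Hj. set (g := (j - i)%nat).
  exists g, (fun k => if orb (Nat.eqb k 0) (Nat.eqb k g) then a else orbit z (i + k)).
  split; [|split].
  - apply (shadow_chain z i); [unfold g; lia|].
    intros k Hk. destruct (Nat.eqb_spec k 0) as [->|]; [now rewrite Nat.add_0_r|].
    destruct (Nat.eqb_spec k g) as [->|]; simpl.
    + now replace (i + g)%nat with j by (unfold g; lia).
    + rewrite d_refl. lra.
  - reflexivity.
  - now rewrite Nat.eqb_refl, Bool.orb_true_r.
Qed.

Lemma ball_visited_once a r : ~ has_cycle del a -> r < eta ->
  forall z i j, (i < j)%nat -> ball r a (orbit z i) -> ball r a (orbit z j) -> False.
Proof.
  intros Hno Hr z i j Hij Hi Hj. apply Hno.
  apply (return_cycle a z i j Hij); unfold ball in *; lra.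
Qed.

(* Both points of an entropy pair carry del-cycles: otherwise the orbits visit
   one of the two balls at most once, which forces zero entropy. *)
Lemma entropy_pair_cycles x y : entropy_pair d f x y -> has_cycle del x /\ has_cycle del y.
Proof.
  intro He. destruct (separating_radius x y eta (proj1 He) Heta_pos) as [r [Hr [Hreta Hrxy]]].
  destruct (entropy_pair_balls x y r He Hr Hrxy) as [h [Hent Hh]].
  pose proof (ball_disjoint r x y Hrxy) as Hdisj.
  split; apply NNPP; intro Hno; apply (Rlt_not_le _ _ Hh).
  - refine (zero_entropy_criterion x _ _ _ _ 0 _ _ exit_times_trivial
              (single_visit_separable _ _ (ball_visited_once x r Hno Hreta) Hdisj) h Hent);
      auto.
  - refine (zero_entropy_criterion x _ _ _ _ 0 _ _ exit_times_trivial
              (stretch_separable_swap _ _ _ _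
                 (single_visit_separable _ _ (ball_visited_once y r Hno Hreta) _)) h Hent);
      auto.
    intros w [HB HA]. exact (Hdisj w (conj HA HB)).
Qed.

Definition CR_chain (a b : X) (k : nat) : Prop :=
  exists c, delta_chain d f del k c /\ (forall i, (i <= k)%nat -> CR d f (c i)) /\
            c O = a /\ c k = b.

Lemma CR_chain_concat a b e k1 k2 :
  CR_chain a b k1 -> CR_chain b e k2 -> CR_chain a e (k1 + k2).
Proof.
  intros [c1 [[H1k H1] [H1C [H10 H1e]]]] [c2 [[H2k H2] [H2C [H20 H2e]]]].
  exists (fun i => if Nat.leb i k1 then c1 i else c2 (i - k1)%nat).
  split; [split|split; [|split]].
  - lia.
  - intros i Hi. destruct (Nat.leb_spec i k1); destruct (Nat.leb_spec (S i) k1).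
    + apply H1; lia.
    + replace i with k1 by lia. rewrite H1e, <- H20.
      replace (S k1 - k1)%nat with 1%nat by lia. apply H2. lia.
    + lia.
    + replace (S i - k1)%nat with (S (i - k1)) by lia. apply H2. lia.
  - intros i Hi. destruct (Nat.leb_spec i k1); [apply H1C|apply H2C]; lia.
  - exact H10.
  - destruct (Nat.leb_spec (k1 + k2) k1); [lia|].
    now replace (k1 + k2 - k1)%nat with k2 by lia.
Qed.

Lemma CR_chain_pump_forth x y a b :
  CR_chain x x a -> CR_chain x y b -> forall j, CR_chain x y (a * j + b).
Proof.
  intros Hloop Hxy j. induction j as [|j IH]; [now rewrite Nat.mul_0_r|].
  replace (a * S j + b)%nat with (a + (a * j + b))%nat by lia.
  exact (CR_chain_concat x x y a _ Hloop IH).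
Qed.

Lemma CR_chain_pump_back x y a b :
  CR_chain x x a -> CR_chain y x b -> forall j, CR_chain y x (b + a * j).
Proof.
  intros Hloop Hyx j. induction j as [|j IH]; [now rewrite Nat.mul_0_r, Nat.add_0_r|].
  replace (b + a * S j)%nat with (b + a * j + a)%nat by lia.
  exact (CR_chain_concat y x x _ a IH Hloop).
Qed.

Lemma near_CR_ball a r : CR d f a -> r < eta -> forall w, ball r a w -> near_CR eta w.
Proof. intros Ha Hr w Hw. exists a. unfold ball in Hw. split; [exact Ha|lra]. Qed.

(* A stretch of an orbit inside the eta-neighbourhood of CR(f), anchored at CR
   points eta-close to its ends, is traced by a del-chain through CR(f):
   replace each orbit point by an eta-close CR point. *)
Lemma stretch_CR_chain z a b i j : (i < j)%nat ->
  (forall t, (i <= t)%nat -> (t <= j)%nat -> near_CR eta (orbit z t)) ->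
  CR d f a -> CR d f b -> d a (orbit z i) < eta -> d b (orbit z j) < eta ->
  CR_chain a b (j - i).
Proof.
  intros Hij HV Ha Hb Hai Hbj.
  assert (Hpick : forall w, exists p, near_CR eta w -> CR d f p /\ d p w < eta).
  { intro w. destruct (classic (near_CR eta w)) as [[p Hp]|Hn]; [exists p; auto|exists w; tauto]. }
  destruct (choice _ Hpick) as [pick Hpicks].
  set (g := (j - i)%nat).
  set (c := fun k => if Nat.eqb k 0 then a else if Nat.eqb k g then b else pick (orbit z (i + k))).
  assert (Hinner : forall k, (k <= g)%nat -> k <> 0%nat -> k <> g ->
                     CR d f (c k) /\ d (c k) (orbit z (i + k)) < eta).
  { intros k Hk H0 Hg. unfold c. rewrite (proj2 (Nat.eqb_neq k 0) H0), (proj2 (Nat.eqb_neq k g) Hg).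
    apply Hpicks, HV; unfold g in *; lia. }
  exists c. split; [|split; [|split]].
  - apply (shadow_chain z i); [unfold g; lia|]. intros k Hk.
    destruct (Nat.eq_dec k 0) as [->|H0]; [now rewrite Nat.add_0_r|].
    destruct (Nat.eq_dec k g) as [->|Hg]; [|apply Hinner; auto].
    unfold c. rewrite Nat.eqb_refl. destruct (Nat.eqb_spec g 0); [unfold g in *; lia|].
    now replace (i + g)%nat with j by (unfold g; lia).
  - intros k Hk.
    destruct (Nat.eq_dec k 0) as [->|H0]; [exact Ha|].
    destruct (Nat.eq_dec k g) as [->|Hg]; [|apply Hinner; auto].
    unfold c. rewrite Nat.eqb_refl. destruct (Nat.eqb_spec g 0); [unfold g in *; lia|exact Hb].
  - reflexivity.
  - unfold c. rewrite Nat.eqb_refl. destruct (Nat.eqb_spec g 0); [unfold g in *; lia|reflexivity].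
Qed.

(* For an entropy pair of CR points there is a CR-chain from y back to x:
   otherwise, on each stretch near CR(f), the visits to the ball around x all
   precede the first visit to the ball around y, forcing zero entropy. *)
Lemma back_chain x y : entropy_pair d f x y -> CR d f x -> CR d f y ->
  exists q, CR_chain y x q.
Proof.
  intros He HCx HCy.
  destruct (separating_radius x y eta (proj1 He) Heta_pos) as [r [Hr [Hreta Hrxy]]].
  destruct (entropy_pair_balls x y r He Hr Hrxy) as [h [Hent Hh]].
  destruct (near_CR_exit_times x eta Heta_pos) as [M HM].
  apply NNPP. intro Hnone. apply (Rlt_not_le _ _ Hh).
  refine (zero_entropy_criterion x (near_CR eta) _ _ (fun s i => (i < s)%nat) M
            (near_CR_ball x r HCx Hreta) (near_CR_ball y r HCy Hreta) HM _ h Hent).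
  intros z n I HI HV.
  destruct (first_visit I (fun i => ball r y (orbit z i)) n HI) as [s [Hs [Hmin Hvis]]].
  exists s. split; [exact Hs|]. intros i Hi. split.
  - intro HA. destruct (Nat.lt_ge_cases i s) as [|Hsi]; [assumption|exfalso].
    destruct Hvis as [->|[HIs HBs]]; [specialize (HI i Hi); lia|].
    destruct (Nat.eq_dec i s) as [->|Hne]; [exact (ball_disjoint r x y Hrxy _ (conj HA HBs))|].
    apply Hnone. exists (i - s)%nat.
    apply (stretch_CR_chain z); auto; [lia|intros t H1 H2; apply (HV s i t); auto|..];
      unfold ball in *; lra.
  - intros HB Hlt. specialize (Hmin i Hi HB). lia.
Qed.

(* Otherwise, after the first visit to the ball around x, the times of visits
   to the two balls are told apart by the lengths of loops at x. *)
Lemma forth_chain x y : entropy_pair d f x y -> CR d f x -> CR d f y ->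
  exists p v, CR_chain x y p /\ (v = 0%nat \/ CR_chain x x v) /\ CR_chain x x (p + v).
Proof.
  intros He HCx HCy.
  destruct (separating_radius x y eta (proj1 He) Heta_pos) as [r [Hr [Hreta Hrxy]]].
  destruct (entropy_pair_balls x y r He Hr Hrxy) as [h [Hent Hh]].
  destruct (near_CR_exit_times x eta Heta_pos) as [M HM].
  set (loop := fun v => v = 0%nat \/ CR_chain x x v).
  apply NNPP. intro Hnone. apply (Rlt_not_le _ _ Hh).
  refine (zero_entropy_criterion x (near_CR eta) _ _
            (fun s i => (s <= i)%nat /\ exists v, loop v /\ loop (i - s + v)%nat) M
            (near_CR_ball x r HCx Hreta) (near_CR_ball y r HCy Hreta) HM _ h Hent).
  intros z n I HI HV.
  destruct (first_visit I (fun i => ball r x (orbit z i)) n HI) as [s [Hs [Hmin Hvis]]].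
  exists s. split; [exact Hs|]. intros i Hi. specialize (HI i Hi) as Hin.
  destruct Hvis as [->|[HIs HAs]].
  { split; [intro HA; specialize (Hmin i Hi HA)|intros _ [Hle _]]; lia. }
  split.
  - intro HA. specialize (Hmin i Hi HA). split; [exact Hmin|].
    exists 0%nat. split; [now left|]. rewrite Nat.add_0_r.
    destruct (Nat.eq_dec i s) as [->|Hne]; [left; lia|right].
    apply (stretch_CR_chain z); auto; [lia|intros t H1 H2; apply (HV s i t); auto|..];
      unfold ball in *; lra.
  - intros HB [Hsi [v [Hv Hiv]]].
    destruct (Nat.eq_dec i s) as [->|Hne]; [exact (ball_disjoint r x y Hrxy _ (conj HAs HB))|].
    apply Hnone. exists (i - s)%nat, v. split; [|split; [exact Hv|]].
    + apply (stretch_CR_chain z); auto; [lia|intros t H1 H2; apply (HV s i t); auto|..];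
        unfold ball in *; lra.
    + destruct Hiv as [Hiv|Hiv]; [lia|exact Hiv].
Qed.

Lemma commensurable_chains x y : entropy_pair d f x y -> CR d f x -> CR d f y ->
  exists P Q, CR_chain x y P /\ CR_chain x x P /\ CR_chain y x Q /\ CR_chain x x Q.
Proof.
  intros He HCx HCy.
  destruct (back_chain x y He HCx HCy) as [q Hq].
  destruct (forth_chain x y He HCx HCy) as [p [v [Hp [Hv Hpv]]]].
  assert (Hxy : CR_chain x y (p + v)).
  { destruct Hv as [->|Hv]; [now rewrite Nat.add_0_r|].
    rewrite Nat.add_comm. exact (CR_chain_concat x x y v p Hv Hp). }
  exists (p + v)%nat, (q + (p + v))%nat. repeat split; auto.
  - exact (CR_chain_concat y x x q (p + v) Hq Hpv).
  - rewrite Nat.add_comm. exact (CR_chain_concat x y x (p + v) q Hxy Hq).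
Qed.

End FineChains.

Lemma entropy_pair_CR x y : entropy_pair d f x y -> CR d f x /\ CR d f y.
Proof.
  intro He. split; intros del Hdel;
    destruct (chain_modulus del Hdel) as [eta [Heta [Hsmall Hmod]]];
    apply (entropy_pair_cycles del eta Heta Hsmall Hmod x y He).
Qed.

(* x ~ y as soon as, at every scale, there are CR-chains x -> y and y -> x
   whose lengths are loop lengths at x: pump the loops up to the common
   length P Q n. *)
Lemma cr_rel_of_chains x y : CR d f x -> CR d f y ->
  (forall del, 0 < del -> exists P Q, CR_chain del x y P /\ CR_chain del x x P /\
                                      CR_chain del y x Q /\ CR_chain del x x Q) ->
  cr_rel d f x y.
Proof.
  intros HCx HCy Hch. split; [exact HCx|split; [exact HCy|]].
  intros del Hdel. destruct (Hch del Hdel) as [P [Q [HP [HPx [HQ HQx]]]]].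
  assert (HP1 : (1 <= P)%nat) by (destruct HP as [c [[Hk _] _]]; exact Hk).
  assert (HQ1 : (1 <= Q)%nat) by (destruct HQ as [c [[Hk _] _]]; exact Hk).
  exists (P * Q)%nat, 1%nat. split; [nia|split; [lia|]]. intros n Hn.
  assert (Hforth : CR_chain del x y (P * Q * n)).
  { replace (P * Q * n)%nat with (P * (Q * n - 1) + P)%nat by nia.
    apply CR_chain_pump_forth; assumption. }
  assert (Hback : CR_chain del y x (P * Q * n)).
  { replace (P * Q * n)%nat with (Q + Q * (P * n - 1))%nat by nia.
    apply CR_chain_pump_back; assumption. }
  destruct Hforth as [cx [Hcx [HCcx [Hcx0 Hcxe]]]].
  destruct Hback as [cy [Hcy [HCcy [Hcy0 Hcye]]]].
  exists cx, cy. split; [exact Hcx|split; [exact Hcy|split]].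
  - intros i Hi. split; [apply HCcx|apply HCcy]; exact Hi.
  - repeat split; assumption.
Qed.

End Dynamics.
End CompactMetric.

Theorem lemma3p3 (X : Type) (d : X -> X -> R) (f : X -> X)
  (hd : is_metric d) (hc : compact_space d) (hf : continuous_map d f) :
  forall x y : X, entropy_pair d f x y ->
    (CR d f x /\ CR d f y) /\ cr_rel d f x y.
Proof.
  intros x y He.
  destruct (entropy_pair_CR X d hd hc f hf x y He) as [HCx HCy].
  split; [split; assumption|].
  apply cr_rel_of_chains; [assumption|assumption|].
  intros del Hdel.
  destruct (chain_modulus X d hd hc f hf del Hdel) as [eta [Heta [Hsmall Hmod]]].
  exact (commensurable_chains X d hd hc f hf del eta Heta Hsmall Hmod x y He HCx HCy).
Qed.
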